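(* Let $\langle(\kappa_n,I_n):n<\omega\rangle$ be such that each $\kappa_n$ is a cardinal and $I_n$ is an ideal on $\kappa_n$, and let $\langle J_n:n<\omega\rangle$ be the associated ideals defined in the context. Then for every $n<\omega$ and $A\subseteq\prod_{\ell<n}\kappa_\ell$: $A\in J_n$ if and only if there are functions $f_0,\dots,f_{n-1}$ such that $\mathrm{Dom}(f_\ell)=\prod_{m=\ell+1}^{n-1}\kappa_m$, $\mathrm{Rang}(f_\ell)\subseteq I_\ell$, and $A\subseteq\bigcup_{\ell<n}A^n_\ell(f_\ell)$, where $$A^n_\ell(f_\ell)=\{\eta\in\textstyle\prod_{m<n}\kappa_m:\eta(\ell)\in f_\ell(\eta\restriction(\ell,n))\}$$ and $\eta\restriction(\ell,n)=\langle\eta(\ell+1),\dots,\eta(n-1)\rangle$.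
   Context: $J_n$ is an ideal on $\prod_{\ell<n}\kappa_\ell$ defined by induction: $J_0$ is the trivial ideal $\{\emptyset\}$ on $\{\langle\rangle\}$; $J_{n+1}=\{A\subseteq\prod_{\ell\le n}\kappa_\ell:\{\alpha<\kappa_n:\{\eta\in\prod_{\ell<n}\kappa_\ell:\eta^\frown\langle\alpha\rangle\in A\}\notin J_n\}\in I_n\}$. *)

From Stdlib Require Import List Arith.
Import ListNotations.

Section Defs.
Variable T : Type.

(* kappa l : the cardinal kappa_l, viewed as a set of elements of an ambient
   type T (e.g. the ordinals); kappa : nat -> (T -> Prop). *)

(* rho \in prod_{m = k}^{k+len-1} kappa_m, sequences represented as lists. *)
Definition inprod_from (kappa : nat -> T -> Prop) (k len : nat) (rho : list T) : Prop :=
  length rho = len /\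
  forall (i : nat) (x : T), nth_error rho i = Some x -> kappa (k + i) x.

Definition inprod (kappa : nat -> T -> Prop) (n : nat) (eta : list T) : Prop :=
  inprod_from kappa 0 n eta.

Definition is_ideal_on (X : T -> Prop) (I : (T -> Prop) -> Prop) : Prop :=
  (forall A, I A -> forall x, A x -> X x) /\
  I (fun _ => False) /\
  (forall A B : T -> Prop, I B -> (forall x, A x -> B x) -> I A) /\
  (forall A B : T -> Prop, I A -> I B -> I (fun x => A x \/ B x)) /\
  ~ I X.

Fixpoint J (kappa : nat -> T -> Prop) (I : nat -> (T -> Prop) -> Prop) (n : nat)
  (A : list T -> Prop) : Prop :=
  match n with
  | 0 => forall eta, ~ A eta
  | S n' => (forall eta, A eta -> inprod kappa (S n') eta) /\
            I n' (fun alpha => kappa n' alpha /\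
                     ~ J kappa I n' (fun eta => A (eta ++ [alpha])))
  end.

Definition A_set (kappa : nat -> T -> Prop) (n l : nat) (fl : list T -> (T -> Prop))
  (eta : list T) : Prop :=
  inprod kappa n eta /\
  exists x, nth_error eta l = Some x /\ fl (skipn (S l) eta) x.

End Defs.

(* A set A ⊆ ∏_{l≤n} κ_l is split into its fibres
   A_α = {η : η⁀⟨α⟩ ∈ A}.  If A ∈ J_{n+1}, the bad set
   B = {α : A_α ∉ J_n} lies in I_n and becomes f_n; every other fibre has,
   by induction, a witness g_α, and the f_l (l < n) are obtained by gluing
   the g_α along the last coordinate.  Conversely, given witnesses f for A,
   every α ∉ f_n(⟨⟩) yields witnesses f_l(· ⁀⟨α⟩) for A_α, so the bad set
   is contained in f_n(⟨⟩) ∈ I_n. *)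

From Stdlib Require Import List Arith Lia Classical IndefiniteDescription.
Import ListNotations.

Section Products.
Variables (T : Type) (kappa : nat -> T -> Prop).

Lemma inprod_from_nil k : inprod_from T kappa k 0 [].
Proof.
  split; [reflexivity|]. intros [|i] x Hx; discriminate.
Qed.

Lemma inprod_from_snoc k len r a :
  inprod_from T kappa k len r -> kappa (k + len) a ->
  inprod_from T kappa k (S len) (r ++ [a]).
Proof.
  intros [Hlen Hr] Ha. subst len. split.
  - rewrite length_app; simpl; lia.
  - intros i x Hi. destruct (Nat.lt_ge_cases i (length r)).
    + rewrite nth_error_app1 in Hi by assumption. eauto.
    + rewrite nth_error_app2 in Hi by assumption.
      destruct (i - length r) as [|j] eqn:E; simpl in Hi.
      * injection Hi as <-. replace i with (length r) by lia. exact Ha.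
      * destruct j; discriminate.
Qed.

Lemma inprod_from_snoc_inv k len rho :
  inprod_from T kappa k (S len) rho ->
  exists r a, rho = r ++ [a] /\ inprod_from T kappa k len r /\ kappa (k + len) a.
Proof.
  intros [Hlen Hrho].
  destruct (exists_last (l := rho)) as [r [a ->]].
  { intros ->. discriminate. }
  rewrite length_app in Hlen; simpl in Hlen.
  exists r, a. split; [reflexivity|]. split.
  - split; [lia|]. intros i x Hi.
    apply Hrho. rewrite nth_error_app1; [exact Hi|].
    apply nth_error_Some. congruence.
  - replace len with (length r) by lia. apply Hrho.
    rewrite nth_error_app2, Nat.sub_diag by lia. reflexivity.
Qed.

Lemma inprod_snoc_inv n eta a :
  inprod T kappa (S n) (eta ++ [a]) -> inprod T kappa n eta /\ kappa n a.
Proof.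
  intros H. destruct (inprod_from_snoc_inv _ _ _ H) as [r [b [E [Hr Hb]]]].
  apply app_inj_tail in E as [-> ->]. split; assumption.
Qed.

Lemma A_set_snoc n l f eta a :
  l < n -> kappa n a -> inprod T kappa n eta ->
  A_set T kappa (S n) l f (eta ++ [a]) <->
  A_set T kappa n l (fun rho => f (rho ++ [a])) eta.
Proof.
  intros Hl Ha Heta.
  assert (Hlen : length eta = n) by apply Heta.
  assert (Hskip : skipn (S l) (eta ++ [a]) = skipn (S l) eta ++ [a]).
  { rewrite skipn_app. replace (S l - length eta) with 0 by lia. reflexivity. }
  unfold A_set. rewrite nth_error_app1, Hskip by lia.
  split; intros [_ Hx]; split; [exact Heta| |apply inprod_from_snoc|]; assumption.
Qed.

Lemma A_set_ext n l f f' eta :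
  (forall rho, f rho = f' rho) ->
  A_set T kappa n l f eta -> A_set T kappa n l f' eta.
Proof.
  intros Hff' [Heta [x [Hx Hf]]]. split; [exact Heta|].
  exists x. rewrite <- Hff'. split; assumption.
Qed.

Lemma A_set_last n f eta a :
  length eta = n -> A_set T kappa (S n) n f (eta ++ [a]) -> f [] a.
Proof.
  intros Hlen [_ [x [Hx Hf]]].
  rewrite nth_error_app2, Hlen, Nat.sub_diag in Hx by lia.
  injection Hx as <-.
  rewrite skipn_all2 in Hf; [exact Hf|]. rewrite length_app; simpl; lia.
Qed.

End Products.

Section Covers.
Variables (T : Type) (kappa : nat -> T -> Prop) (I : nat -> (T -> Prop) -> Prop).
Hypothesis I_empty : forall l, I l (fun _ => False).
Hypothesis I_downward : forall l (X Y : T -> Prop),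
  I l Y -> (forall x, X x -> Y x) -> I l X.

Definition fiber (A : list T -> Prop) (alpha : T) : list T -> Prop :=
  fun eta => A (eta ++ [alpha]).

Definition ideal_valued (n : nat) (f : nat -> list T -> T -> Prop) : Prop :=
  forall l, l < n -> forall rho, inprod_from T kappa (S l) (n - S l) rho ->
    I l (f l rho).

Definition covers (n : nat) (A : list T -> Prop) (f : nat -> list T -> T -> Prop) :
  Prop :=
  forall eta, A eta -> exists l, l < n /\ A_set T kappa n l (f l) eta.

Lemma ideal_valued_empty n : ideal_valued n (fun _ _ _ => False).
Proof. intros l _ rho _. apply I_empty. Qed.

Lemma ideal_valued_fiber n f alpha :
  kappa n alpha -> ideal_valued (S n) f ->
  ideal_valued n (fun l rho => f l (rho ++ [alpha])).
Proof.
  intros Halpha Hf l Hl rho Hrho. apply Hf; [lia|].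
  replace (S n - S l) with (S (n - S l)) by lia.
  apply inprod_from_snoc; [exact Hrho|].
  replace (S l + (n - S l)) with n by lia. exact Halpha.
Qed.

Lemma covers_fiber n A f alpha :
  (forall eta, A eta -> inprod T kappa (S n) eta) ->
  ~ f n [] alpha -> covers (S n) A f ->
  covers n (fiber A alpha) (fun l rho => f l (rho ++ [alpha])).
Proof.
  intros HA Hnot Hcov eta Heta.
  destruct (inprod_snoc_inv _ _ _ _ _ (HA _ Heta)) as [Hin Halpha].
  destruct (Hcov _ Heta) as [l [Hl HAl]].
  destruct (Nat.eq_dec l n) as [->|Hne].
  - exfalso. apply Hnot. apply (A_set_last T kappa n _ eta); [apply Hin|exact HAl].
  - exists l. split; [lia|]. apply A_set_snoc; trivial; lia.
Qed.

Lemma covers_J n A f :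
  (forall eta, A eta -> inprod T kappa n eta) ->
  ideal_valued n f -> covers n A f -> J T kappa I n A.
Proof.
  revert A f. induction n as [|n IH]; intros A f HA Hval Hcov.
  - intros eta Heta. destruct (Hcov _ Heta) as [l [Hl _]]. lia.
  - split; [exact HA|].
    apply (I_downward n _ (f n [])).
    { apply Hval; [lia|]. rewrite Nat.sub_diag. apply inprod_from_nil. }
    intros alpha [Halpha HnotJ]. apply NNPP. intros Hnot. apply HnotJ.
    apply (IH _ (fun l rho => f l (rho ++ [alpha]))).
    + intros eta Heta. exact (proj1 (inprod_snoc_inv _ _ _ _ _ (HA _ Heta))).
    + apply ideal_valued_fiber; assumption.
    + apply covers_fiber; assumption.
Qed.

Definition glue (B : T -> Prop) (g : T -> nat -> list T -> T -> Prop) (n : nat) :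
  nat -> list T -> T -> Prop :=
  fun l rho =>
    if Nat.eq_dec l n then B
    else match rev rho with
         | [] => fun _ => False
         | a :: r => g a l (rev r)
         end.

Lemma glue_snoc B g n l r a : l <> n -> glue B g n l (r ++ [a]) = g a l r.
Proof.
  intros Hl. unfold glue. destruct (Nat.eq_dec l n); [contradiction|].
  rewrite rev_unit, rev_involutive. reflexivity.
Qed.

Lemma ideal_valued_glue n B g :
  I n B -> (forall a, ideal_valued n (g a)) -> ideal_valued (S n) (glue B g n).
Proof.
  intros HB Hg l Hl rho Hrho.
  destruct (Nat.eq_dec l n) as [->|Hne].
  - unfold glue. destruct (Nat.eq_dec n n); [exact HB|contradiction].
  - replace (S n - S l) with (S (n - S l)) in Hrho by lia.
    destruct (inprod_from_snoc_inv _ _ _ _ _ Hrho) as [r [a [-> [Hr _]]]].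
    rewrite glue_snoc by exact Hne. apply Hg; [lia|exact Hr].
Qed.

Lemma covers_glue n A B g :
  (forall eta, A eta -> inprod T kappa (S n) eta) ->
  (forall a, kappa n a -> ~ B a -> covers n (fiber A a) (g a)) ->
  covers (S n) A (glue B g n).
Proof.
  intros HA Hg eta Heta.
  destruct (inprod_from_snoc_inv _ _ _ _ _ (HA _ Heta)) as [r [a [-> [Hr Ha]]]].
  destruct (classic (B a)) as [HBa|HBa].
  - exists n. split; [lia|]. split; [exact (HA _ Heta)|].
    assert (Hlen : length r = n) by apply Hr.
    exists a. split.
    + rewrite nth_error_app2, Hlen, Nat.sub_diag by lia. reflexivity.
    + unfold glue. destruct (Nat.eq_dec n n); [exact HBa|contradiction].
  - destruct (Hg a Ha HBa r Heta) as [l [Hl HAl]].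
    exists l. split; [lia|]. apply A_set_snoc; trivial.
    apply (A_set_ext T kappa n l (g a l)); [|exact HAl].
    intros rho. symmetry. apply glue_snoc. lia.
Qed.

Lemma J_covers n A :
  (forall eta, A eta -> inprod T kappa n eta) -> J T kappa I n A ->
  exists f, ideal_valued n f /\ covers n A f.
Proof.
  revert A. induction n as [|n IH]; intros A HA HJ.
  - exists (fun _ _ _ => False). split.
    + apply ideal_valued_empty.
    + intros eta Heta. exfalso. exact (HJ eta Heta).
  - destruct HJ as [_ HB].
    set (B := fun alpha => kappa n alpha /\ ~ J T kappa I n (fiber A alpha)) in HB.
    assert (Hwit : forall alpha, exists g, ideal_valued n g /\
                     (J T kappa I n (fiber A alpha) -> covers n (fiber A alpha) g)).
    { intros alpha.
      destruct (classic (J T kappa I n (fiber A alpha))) as [HJa|HJa].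
      - destruct (IH (fiber A alpha)) as [g [Hval Hcov]]; [|exact HJa|].
        + intros eta Heta. exact (proj1 (inprod_snoc_inv _ _ _ _ _ (HA _ Heta))).
        + exists g. split; [exact Hval|intros _; exact Hcov].
      - exists (fun _ _ _ => False). split; [apply ideal_valued_empty|contradiction]. }
    destruct (functional_choice _ Hwit) as [g Hg].
    exists (glue B g n). split.
    + apply ideal_valued_glue; [exact HB|intros a; apply Hg].
    + apply covers_glue; [exact HA|].
      intros a Ha HBa. apply Hg. apply NNPP. intros HnJ. apply HBa. split; assumption.
Qed.

End Covers.

Theorem claim3p3 (T : Type) (kappa : nat -> T -> Prop)
  (I : nat -> (T -> Prop) -> Prop)
  (HI : forall n, is_ideal_on T (kappa n) (I n)) :
  forall (n : nat) (A : list T -> Prop),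
    (forall eta, A eta -> inprod T kappa n eta) ->
    (J T kappa I n A <->
     exists f : nat -> list T -> (T -> Prop),
       (forall l, l < n -> forall rho, inprod_from T kappa (S l) (n - S l) rho ->
                  I l (f l rho)) /\
       (forall eta, A eta -> exists l, l < n /\ A_set T kappa n l (f l) eta)).
Proof.
  intros n A HA.
  assert (I_empty : forall l, I l (fun _ => False)) by apply HI.
  assert (I_downward : forall l (X Y : T -> Prop),
            I l Y -> (forall x, X x -> Y x) -> I l X)
    by (intros l X Y; apply HI).
  split.
  - apply J_covers; assumption.
  - intros [f [Hval Hcov]]. apply (covers_J T kappa I I_downward n A f); assumption.
Qed.
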